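(* Let $N\ge2$ be an integer and let $\sigma$ be a finite set of functions $\mathbb{Z}_2\to\mathbb{Z}_N$ that is totally indistinguishable. Let $G(\sigma)$ be the simple undirected graph whose vertex set is $\sigma$, in which two distinct functions $f,g\in\sigma$ are adjacent iff $f(0)=g(0)$ or $f(1)=g(1)$. Then every connected component of $G(\sigma)$ contains an induced subgraph which is a cycle of even length at least $4$.
   Context: A set $\sigma$ of functions $\mathbb{Z}_M\to\mathbb{Z}_N$ is totally indistinguishable if for every $x\in\mathbb{Z}_M$ and every $f\in\sigma$ there exists $f'\in\sigma$ with $f'\neq f$ and $f'(x)=f(x)$. *)

From mathcomp Require Import all_boot.
Set Implicit Arguments. Unset Strict Implicit. Unset Printing Implicit Defensive.

(* Functions Z_M -> Z_N are represented as finite functions 'I_M -> 'I_N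
   (only equality of values matters). *)
Definition fn (M N : nat) := {ffun 'I_M -> 'I_N}.

Definition totally_indistinguishable (M N : nat) (sigma : {set fn M N}) : Prop :=
  forall (x : 'I_M) (f : fn M N), f \in sigma ->
    exists2 f' : fn M N, f' \in sigma & (f' != f) && (f' x == f x).

Definition z0 : 'I_2 := ord0.
Definition z1 : 'I_2 := ord_max.

Definition Gadj (N : nat) (sigma : {set fn 2 N}) : rel (fn 2 N) :=
  fun f g => [&& f \in sigma, g \in sigma, f != g &
                 (f z0 == g z0) || (f z1 == g z1)].

Definition induced_cycle (N : nat) (sigma : {set fn 2 N}) (c : seq (fn 2 N)) : Prop :=
  [/\ 3 <= size c, uniq c, all (mem sigma) c &
      forall i j : 'I_(size c),
        Gadj sigma (tnth (in_tuple c) i) (tnth (in_tuple c) j)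
        = (val j == (val i).+1 %% size c) || (val i == (val j).+1 %% size c)].

From mathcomp Require Import all_boot zify.
Set Implicit Arguments. Unset Strict Implicit. Unset Printing Implicit Defensive.

(* G(sigma) is the line graph of the bipartite graph B(sigma) on 'I_2 * 'I_N
   in which each f is the edge joining (0, f 0) and (1, f 1).  Total
   indistinguishability says that every non-isolated vertex of B(sigma) has
   degree at least 2, so the component of B(sigma) containing the edge f
   contains a cycle, which has even length since B(sigma) is bipartite.  The
   edges of a simple cycle pairwise share a vertex only when consecutive, so
   they form an induced cycle of the same length in G(sigma). *)

Lemma val_ordS n (i : 'I_n) : val (ordS i) = if i.+1 < n then i.+1 else 0.
Proof.
case: ifP => [/modn_small //| /negbT]; rewrite -leqNgt => le_n.
by rewrite /= (_ : i.+1 = n) ?modnn //; apply/eqP; rewrite eqn_leq le_n ltn_ord.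
Qed.

Lemma ordS_neq n (i : 'I_n) : 1 < n -> ordS i != i.
Proof. by rewrite -val_eqE val_ordS /=; case: ifP; lia. Qed.

Lemma ordS2_neq n (i : 'I_n) : 2 < n -> ordS (ordS i) != i.
Proof. by have := ltn_ord i; rewrite -val_eqE !val_ordS /=; do 2 case: ifP; lia. Qed.

Section MinDegreeCycle.
Variables (T : finType) (e : rel T) (S : pred T).
Hypothesis e_irr : irreflexive e.
Hypothesis S_two_nbrs : forall x, S x -> exists y z, [/\ y != z, e y x, e z x, S y & S z].

(* Extend the path backwards at x by a neighbour other than its successor: if
   that neighbour already lies on the path, it closes a cycle of length >= 3. *)
Lemma cycle_from_uniq_path x p :
  uniq (x :: p) -> path e x p -> all S (x :: p) ->
  exists c, [/\ 2 < size c, uniq c, cycle e c & all S c].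
Proof.
have [k] := ubnP (#|T| - size p); elim: k => // k IHk in x p *.
rewrite ltnS => le_k xp_uniq xp_path xp_S.
have [w [ewx Sw w_nhead]] : exists w, [/\ e w x, S w & w != head x p].
  have [y [z [yz eyx ezx Sy Sz]]] := S_two_nbrs (allP xp_S x (mem_head x p)).
  by case: (eqVneq y (head x p)) => [<-|]; [exists z; rewrite eq_sym | exists y].
have wx : w != x by apply: contraTneq ewx => ->; rewrite e_irr.
case: (boolP (w \in p)) => [w_p | w_notp].
  case/splitPr: w_p xp_uniq xp_path xp_S w_nhead => p1 p2.
  rewrite -cat_rcons -cat_cons.
  rewrite cat_uniq cat_path all_cat => /andP[c_uniq _] /andP[c_path _] /andP[c_S _] w_nhead.
  exists (x :: rcons p1 w); split=> //; last by rewrite /= rcons_path c_path last_rcons.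
  by case: p1 {c_uniq c_path c_S} w_nhead => [|? ?] /=; rewrite ?eqxx // size_rcons.
have size_xp : size (w :: x :: p) <= #|T|.
  by rewrite -(card_uniqP _) ?max_card //= inE negb_or wx w_notp.
apply: (IHk w (x :: p)) => //=; first by move: size_xp le_k => /=; lia.
- by rewrite inE negb_or wx w_notp.
- by rewrite ewx.
- by rewrite Sw.
Qed.

Lemma cycle_in_min_degree x : S x ->
  exists c, [/\ 2 < size c, uniq c, cycle e c & all S c].
Proof. by move=> Sx; apply: (@cycle_from_uniq_path x [::]); rewrite //= Sx. Qed.
End MinDegreeCycle.

Lemma cycle_tnth (T : Type) (e : rel T) (c : seq T) (i : 'I_(size c)) :
  cycle e c -> e (tnth (in_tuple c) i) (tnth (in_tuple c) (ordS i)).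
Proof.
case: c i => [[]//|x p] i /= /(pathP x)/(_ i); rewrite size_rcons => /(_ (ltn_ord i)).
rewrite !(tnth_nth x) -rcons_cons nth_rcons ltn_ord /= nth_rcons.
rewrite -[_ %% _]/(val (ordS i)) val_ordS ltnS if_same.
by case: ltnP.
Qed.

Lemma alternating_cycle_even n (col : 'I_n -> bool) :
  (forall i, col (ordS i) = ~~ col i) -> ~~ odd n.
Proof.
case: n col => // n col col_alt.
have col_val m (lt_m : m < n.+1) : col (Ordinal lt_m) = col ord0 (+) odd m.
  elim: m lt_m => [|m IHm] lt_m; first by rewrite addbF; congr col; apply: val_inj.
  have -> : Ordinal lt_m = ordS (Ordinal (ltnW lt_m)).
    by apply: val_inj; rewrite val_ordS /= lt_m.
  by rewrite col_alt IHm /= addbN.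
have := col_alt ord_max; rewrite (_ : ordS ord_max = ord0); last first.
  by apply: val_inj; rewrite val_ordS ltnn.
rewrite -[ord_max]/(Ordinal (ltnSn n)) col_val /=.
by case: (col ord0); case: (odd n).
Qed.

Section LineGraphOfCycle.
Variables (T : finType) (E : eqType) (incident : E -> T -> bool).
Variables (n : nat) (v : 'I_n -> T) (C : 'I_n -> E).
Hypotheses (n_gt2 : 2 < n) (v_inj : injective v).
Hypothesis C_ends : forall i t, incident (C i) t = (t == v i) || (t == v (ordS i)).

Lemma line_cycle_inj : injective C.
Proof.
move=> i j eqC.
have /orP[/eqP/v_inj -> // | /eqP/v_inj ji] : (v j == v i) || (v j == v (ordS i)).
  by rewrite -C_ends eqC C_ends eqxx.
have /orP[/eqP/v_inj sji | /eqP/v_inj/ordS_inj //] :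
    (v (ordS j) == v i) || (v (ordS j) == v (ordS i)).
  by rewrite -C_ends eqC C_ends eqxx orbT.
by have := ordS2_neq i n_gt2; rewrite -ji sji eqxx.
Qed.

Lemma line_cycle_share i j :
  [exists t, incident (C i) t && incident (C j) t] = [|| j == i, j == ordS i | i == ordS j].
Proof.
apply/existsP/idP => [[t] | ].
  rewrite !C_ends => /andP[/orP[]/eqP-> /orP[]/eqP/v_inj].
  - by move->; rewrite eqxx.
  - by move->; rewrite eqxx !orbT.
  - by move->; rewrite eqxx orbT.
  - by move/ordS_inj->; rewrite eqxx.
case/or3P=> /eqP->.
- by exists (v i); rewrite C_ends eqxx.
- by exists (v (ordS i)); rewrite !C_ends eqxx !orbT.
- by exists (v (ordS j)); rewrite !C_ends eqxx !orbT.
Qed.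

Lemma line_cycle_adj i j :
  (C i != C j) && [exists t, incident (C i) t && incident (C j) t]
  = (j == ordS i) || (i == ordS j).
Proof.
rewrite (inj_eq line_cycle_inj) line_cycle_share.
have ordS_ne k : ordS k != k := ordS_neq k (ltnW n_gt2).
by case: (eqVneq i j) => [->|] //=; rewrite eq_sym (negbTE (ordS_ne j)).
Qed.
End LineGraphOfCycle.

Lemma ord2_cases (x : 'I_2) : x = z0 \/ x = z1.
Proof. by case: x => -[|[|//]] ?; [left|right]; apply: val_inj. Qed.

Lemma ord2_other (x y z : 'I_2) : x != y -> z = x \/ z = y.
Proof. by case: (ord2_cases x) (ord2_cases y) (ord2_cases z) => -> [] -> [] ->; auto. Qed.

Lemma eq_fn2 N (g h : fn 2 N) x y : x != y -> g x = h x -> g y = h y -> g = h.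
Proof. by move=> xy gx gy; apply/ffunP => z; case: (ord2_other z xy) => ->. Qed.

Definition incident N (g : fn 2 N) (u : 'I_2 * 'I_N) := g u.1 == u.2.

Lemma incident_two_ends N (g : fn 2 N) u w :
  incident g u -> incident g w -> u != w ->
  forall t, incident g t = (t == u) || (t == w).
Proof.
case: u w => [x a] [y b] /eqP/= <- /eqP/= <- uw [z c]; rewrite /incident /= !xpair_eqE.
have xy : x != y by apply: contraNneq uw => ->.
have yx : (y == x) = false by rewrite eq_sym (negbTE xy).
by case: (ord2_other z xy) => ->; rewrite eqxx ?(negbTE xy) ?yx /= ?orbF eq_sym.
Qed.

Lemma share_incident N (f g : fn 2 N) :
  ((f z0 == g z0) || (f z1 == g z1)) = [exists u, incident f u && incident g u].
Proof.
apply/idP/existsP => [/orP[] /eqP fg | [[x a] /andP[/eqP/= <- /eqP/= gx]]].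
- by exists (z0, f z0); rewrite /incident fg !eqxx.
- by exists (z1, f z1); rewrite /incident fg !eqxx.
by case: (ord2_cases x) => <-; rewrite gx eqxx ?orbT.
Qed.

Section BipartiteGraph.
Variables (N : nat) (sigma : {set fn 2 N}).

Definition covered u := [exists g in sigma, incident g u].

Definition bip_adj : rel ('I_2 * 'I_N) :=
  fun u w => (u.1 != w.1) && [exists g in sigma, incident g u && incident g w].

Lemma bip_adj_sym : symmetric bip_adj.
Proof.
move=> u w; rewrite /bip_adj eq_sym.
by under eq_existsb => g do rewrite [incident g u && _]andbC.
Qed.

Lemma bip_adj_irr : irreflexive bip_adj.
Proof. by move=> u; rewrite /bip_adj eqxx. Qed.

Lemma bip_adjP u w :
  bip_adj u w -> exists2 g, g \in sigma & incident g u && incident g w.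
Proof. by case/andP=> _ /existsP[g /andP[]]; exists g. Qed.

Lemma bip_adj_covered u w : bip_adj u w -> covered u.
Proof. by case/bip_adjP=> g gs /andP[gu _]; apply/existsP; exists g; rewrite gs. Qed.

Lemma bip_adj_side u w : bip_adj u w -> (w.1 == z0) = ~~ (u.1 == z0).
Proof.
by case/andP=> + _; case: (ord2_cases u.1) (ord2_cases w.1) => -> [] ->.
Qed.

Lemma covered_two_nbrs : totally_indistinguishable sigma ->
  forall u, covered u -> exists y z, [/\ y != z, bip_adj y u & bip_adj z u].
Proof.
move=> TI [x a] /existsP[g /andP[gs /eqP/= ga]]; subst a.
have [h hs /andP[hg /eqP hx]] := TI x g gs.
have [x' x'x] : exists x', x' != x.
  by case: (ord2_cases x) => ->; [exists z1 | exists z0].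
exists (x', g x'), (x', h x'); split.
- apply: contraNneq hg => -[gx'].
  by apply/eqP/(eq_fn2 _ hx (esym gx')); rewrite eq_sym.
- by rewrite /bip_adj x'x; apply/existsP; exists g; rewrite gs /incident !eqxx.
- by rewrite /bip_adj x'x; apply/existsP; exists h; rewrite hs /incident /= hx !eqxx.
Qed.

Lemma share_connect g h u : g \in sigma -> h \in sigma ->
  incident g u -> incident h u -> connect (Gadj sigma) g h.
Proof.
move=> gs hs gu hu; have [-> | gh] := eqVneq g h; first exact: connect0.
apply: connect1; rewrite /Gadj gs hs gh share_incident.
by apply/existsP; exists u; rewrite gu.
Qed.

Lemma bip_connect_Gadj u w g h : connect bip_adj u w -> g \in sigma -> h \in sigma ->
  incident g u -> incident h w -> connect (Gadj sigma) g h.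
Proof.
case/connectP=> p + ->; elim: p u g => [|t p IHp] u g /=.
  by move=> _; apply: share_connect.
case/andP=> /bip_adjP[k ks /andP[ku kt]] tp gs hs gu hw.
exact: connect_trans (share_connect gs ks gu ku) (IHp t k tp ks hs kt hw).
Qed.

Lemma induced_cycle_codom n (C : 'I_n -> fn 2 N) :
  2 < n -> injective C -> (forall i, C i \in sigma) ->
  (forall i j, Gadj sigma (C i) (C j) = (j == ordS i) || (i == ordS j)) ->
  induced_cycle sigma (codom C).
Proof.
move=> n_gt2 C_inj C_sigma C_adj.
have size_C : size (codom C) = n by rewrite size_codom card_ord.
have tnthC k : tnth (in_tuple (codom C)) k = C (cast_ord size_C k).
  have k_lt : k < n by move: (ltn_ord k); rewrite [X in _ < X]size_C.
  rewrite (tnth_nth (C (cast_ord size_C k))) (nth_map (cast_ord size_C k)) ?size_enum_ord //.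
  by congr C; apply: val_inj; rewrite /= nth_enum_ord.
split; first by rewrite size_C.
- by rewrite codomE map_inj_uniq ?enum_uniq.
- by apply/allP => _ /codomP[i ->]; apply: C_sigma.
move=> i j; rewrite !tnthC C_adj -!val_eqE /=.
by move: (nat_of_ord i) (nat_of_ord j) => a b; rewrite size_C.
Qed.

Lemma bip_cycle_even c : cycle bip_adj c -> ~~ odd (size c).
Proof.
move=> c_cycle.
apply: (@alternating_cycle_even _ (fun i => (tnth (in_tuple c) i).1 == z0)) => i.
exact: bip_adj_side (cycle_tnth i c_cycle).
Qed.

Lemma line_graph_of_bip_cycle c : 2 < size c -> uniq c -> cycle bip_adj c ->
  exists C : 'I_(size c) -> fn 2 N,
    [/\ induced_cycle sigma (codom C), forall i, C i \in sigma
      & forall i, incident (C i) (tnth (in_tuple c) i)].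
Proof.
move=> c_gt2 c_uniq c_cycle; pose v := tnth (in_tuple c).
have v_inj : injective v by apply/tuple_uniqP.
have edge_of i : exists g, g \in sigma /\ incident g (v i) && incident g (v (ordS i)).
  by have [g] := bip_adjP (cycle_tnth i c_cycle); exists g.
have [C C_edge] := fin_all_exists edge_of.
have C_sigma i : C i \in sigma by case: (C_edge i).
have C_ends i t : incident (C i) t = (t == v i) || (t == v (ordS i)).
  have [_ /andP[Ci CSi]] := C_edge i; apply: (incident_two_ends Ci CSi).
  by rewrite (inj_eq v_inj) eq_sym ordS_neq // ltnW.
exists C; split=> // [|i]; last by case: (C_edge i) => _ /andP[].
apply: (induced_cycle_codom c_gt2 (line_cycle_inj c_gt2 v_inj C_ends) C_sigma) => i j.
by rewrite /Gadj !C_sigma share_incident (line_cycle_adj c_gt2 v_inj C_ends).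
Qed.

Lemma bip_cycle_in_component f : totally_indistinguishable sigma -> f \in sigma ->
  exists c, [/\ 2 < size c, uniq c, cycle bip_adj c & all (connect bip_adj (z0, f z0)) c].
Proof.
move=> TI fs; pose S := [pred u | connect bip_adj (z0, f z0) u && covered u].
have S_two_nbrs u : S u -> exists y z, [/\ y != z, bip_adj y u, bip_adj z u, S y & S z].
  case/andP=> x0u cov_u; have [y [z [yz yu zu]]] := covered_two_nbrs TI cov_u.
  have S_nbr t : bip_adj t u -> S t.
    move=> tu; rewrite inE (bip_adj_covered tu) andbT.
    by apply: connect_trans x0u (connect1 _); rewrite bip_adj_sym.
  by exists y, z; rewrite !S_nbr.
have S_x0 : S (z0, f z0).
  by rewrite inE connect0; apply/existsP; exists f; rewrite fs /incident eqxx.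
have [c [c_gt2 c_uniq c_cycle c_S]] := cycle_in_min_degree bip_adj_irr S_two_nbrs S_x0.
by exists c; split=> //; apply: sub_all c_S => u /andP[].
Qed.
End BipartiteGraph.

Theorem theorem6 (N : nat) (hN : 2 <= N) (sigma : {set fn 2 N}) :
  totally_indistinguishable sigma ->
  forall f, f \in sigma ->
    exists c : seq (fn 2 N),
      [/\ induced_cycle sigma c, ~~ odd (size c), 4 <= size c &
          all (connect (Gadj sigma) f) c].
Proof.
move=> TI f fs.
have [c [c_gt2 c_uniq c_cycle c_conn]] := bip_cycle_in_component TI fs.
have [C [C_induced C_sigma C_inc]] := line_graph_of_bip_cycle c_gt2 c_uniq c_cycle.
have size_C : size (codom C) = size c by rewrite size_codom card_ord.
have c_even := bip_cycle_even c_cycle.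
exists (codom C); rewrite size_C; split=> //.
  by case: (size c) c_gt2 c_even => [|[|[|[|]]]].
apply/allP => _ /codomP[i ->].
apply: (bip_connect_Gadj (allP c_conn _ (mem_tnth i (in_tuple c))) fs (C_sigma i) _ (C_inc i)).
by rewrite /incident eqxx.
Qed.
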